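(* Let $T$ be a rooted ordered tree with $n$ vertices and root $r$. The straight-line drawing of $T$ produced by Algorithm 1 is monotone (and planar), places $r$ at $(0,0)$, respects the order of the children of every vertex, and places every vertex at a grid point $(x,y)$ with $x,y\in\{0,1,\dots,n-1\}$; i.e., it fits on an $n\times n$ grid.
   Context: $T_v$ is the subtree rooted at $v$, $|T_v|$ its number of vertices. Strategy 1: for a non-leaf vertex $u$ with assigned $a_1(u)<a_2(u)$ and children $v_1,\dots,v_m$ in order, set $a_1(v_1)=a_1(u)$, $a_1(v_i)=a_2(v_{i-1})$ for $1<i\le m$, and $a_2(v_i)=a_1(v_i)+(a_2(u)-a_1(u))\cdot\frac{|T_{v_i}|}{|T_u|-1}$. Point rule $P_1(\theta_1,\theta_2)$ for $0\le\theta_1<\theta_2\le\frac{\pi}{2}$, with $d=\lceil\frac{1}{\theta_2-\theta_1}\rceil$: (i) if $\theta_2-\theta_1>\frac{\pi}{4}$: $(1,1)$; (ii) if $\arctan(\frac12)<\theta_2-\theta_1\le\frac{\pi}{4}$: $(1,2)$ if $\theta_1\ge\frac{\pi}{4}$, $(1,1)$ if $\arctan(\frac12)\le\theta_1<\frac{\pi}{4}$, $(2,1)$ if $\theta_1<\arctan(\frac12)$; (iii) if $\theta_2-\theta_1\le\arctan(\frac12)$: $(d,\lfloor\tan(\theta_1)d+1\rfloor)$ if $\theta_2\le\frac{\pi}{4}$, $(1,1)$ if $\theta_1<\frac{\pi}{4}<\theta_2$, $(\lfloor\tan(\frac{\pi}{2}-\theta_2)d+1\rfloor,d)$ if $\theta_1\ge\frac{\pi}{4}$.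 Algorithm 1 (input: rooted ordered tree $T$ with root $r$): set $a_1(r)=0$, $a_2(r)=\frac{\pi}{2}$ and assign angles to all other vertices top-down by Strategy 1; place $r$ at $(0,0)$; top-down, place each child $v$ of an already placed vertex $u$ at $(x_u,y_u)+P_1(a_1(v),a_2(v))$. A path $p_0,\dots,p_k$ in a straight-line drawing is monotone if there is a line $\ell$ such that the orthogonal projections of $p_0,\dots,p_k$ onto $\ell$ appear along $\ell$ in this order; a drawing is monotone if every pair of vertices is joined by a monotone path. *)

From Stdlib Require Import Reals ZArith List.
Import ListNotations.
Open Scope R_scope.

Inductive tree : Type := Node : list tree -> tree.

Fixpoint tsize (t : tree) : nat :=
  match t with Node ts => S (list_sum (map tsize ts)) end.

(** Vertices of T are addressed by paths from the root: [] is the root,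
    p ++ [i] is the i-th child (0-based, in the given order) of p. *)
Fixpoint subtree (t : tree) (p : list nat) : option tree :=
  match p with
  | [] => Some t
  | i :: p' => match t with Node ts =>
      match nth_error ts i with Some c => subtree c p' | None => None end end
  end.

Definition is_vertex (t : tree) (p : list nat) : Prop := subtree t p <> None.

Definition Zfloor (x : R) : Z := Int_part x.
Definition Zceil (x : R) : Z := (- Int_part (- x))%Z.

Definition P1 (t1 t2 : R) : Z * Z :=
  let d := Zceil (1 / (t2 - t1)) in
  if Rlt_dec (PI / 4) (t2 - t1) then (1%Z, 1%Z)
  else if Rlt_dec (atan (1 / 2)) (t2 - t1) then
    (if Rle_dec (PI / 4) t1 then (1%Z, 2%Z)
     else if Rle_dec (atan (1 / 2)) t1 then (1%Z, 1%Z)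
     else (2%Z, 1%Z))
  else if Rle_dec t2 (PI / 4) then (d, Zfloor (tan t1 * IZR d + 1))
  else if Rlt_dec t1 (PI / 4) then (1%Z, 1%Z)
  else (Zfloor (tan (PI / 2 - t2) * IZR d + 1), d).

(** Strategy 1: given a1(u), a2(u), |T_u| and the children of u in order,
    the list of intervals (a1(v_i), a2(v_i)):  a1(v_1) = a1(u),
    a1(v_i) = a2(v_{i-1}),  a2(v_i) = a1(v_i) + (a2(u)-a1(u)) |T_{v_i}| / (|T_u|-1). *)
Fixpoint child_angles (a1u a2u nu : R) (start : R) (ts : list tree) : list (R * R) :=
  match ts with
  | [] => []
  | c :: ts' =>
      let e := start + (a2u - a1u) * INR (tsize c) / (nu - 1) in
      (start, e) :: child_angles a1u a2u nu e ts'
  end.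

Fixpoint place (t : tree) (a1 a2 : R) (x y : Z) (p : list nat) : Z * Z :=
  match p with
  | [] => (x, y)
  | i :: p' =>
      match t with Node ts =>
        match nth_error ts i, nth_error (child_angles a1 a2 (INR (tsize t)) a1 ts) i with
        | Some c, Some (b1, b2) =>
            let (dx, dy) := P1 b1 b2 in place c b1 b2 (x + dx)%Z (y + dy)%Z p'
        | _, _ => (x, y)
        end
      end
  end.

Definition algorithm1 (t : tree) : list nat -> Z * Z := place t 0 (PI / 2) 0%Z 0%Z.

Definition on_seg (q : R * R) (a b : Z * Z) : Prop :=
  exists l : R, 0 <= l <= 1 /\
    fst q = IZR (fst a) + l * (IZR (fst b) - IZR (fst a)) /\
    snd q = IZR (snd a) + l * (IZR (snd b) - IZR (snd a)).

Definition pt (a : Z * Z) : R * R := (IZR (fst a), IZR (snd a)).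

(** edges of T are identified with their child endpoint c (c <> root);
    the other endpoint is the parent removelast c. *)
Definition is_edge (t : tree) (c : list nat) : Prop := c <> [] /\ is_vertex t c.

Definition planar (t : tree) (pos : list nat -> Z * Z) : Prop :=
  (forall u v, is_vertex t u -> is_vertex t v -> pos u = pos v -> u = v) /\
  (forall c1 c2, is_edge t c1 -> is_edge t c2 -> c1 <> c2 ->
     forall q, on_seg q (pos (removelast c1)) (pos c1) ->
               on_seg q (pos (removelast c2)) (pos c2) ->
     exists w, (w = c1 \/ w = removelast c1) /\ (w = c2 \/ w = removelast c2) /\
               q = pt (pos w)).

Definition tree_adj (u v : list nat) : Prop :=
  (exists i, v = u ++ [i]) \/ (exists i, u = v ++ [i]).

Definition is_path (t : tree) (l : list (list nat)) : Prop :=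
  Forall (is_vertex t) l /\
  forall k, (S k < length l)%nat -> tree_adj (nth k l []) (nth (S k) l []).

Definition monotone_path (pos : list nat -> Z * Z) (l : list (list nat)) : Prop :=
  exists d1 d2 : R, (d1, d2) <> (0, 0) /\
    forall k, (S k < length l)%nat ->
      d1 * IZR (fst (pos (nth k l []))) + d2 * IZR (snd (pos (nth k l [])))
      < d1 * IZR (fst (pos (nth (S k) l []))) + d2 * IZR (snd (pos (nth (S k) l []))).

Definition monotone_drawing (t : tree) (pos : list nat -> Z * Z) : Prop :=
  forall u v, is_vertex t u -> is_vertex t v ->
    exists l, is_path t l /\ hd_error l = Some u /\ last l [] = v /\
              monotone_path pos l.

Definition respects_order (t : tree) (pos : list nat -> Z * Z) : Prop :=
  forall u i j, is_vertex t (u ++ [j]) -> (i < j)%nat ->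
    let a := pos u in let b := pos (u ++ [i]) in let c := pos (u ++ [j]) in
    ((fst b - fst a) * (snd c - snd a) - (snd b - snd a) * (fst c - fst a) > 0)%Z.

(* Every vertex v carries an open wedge of directions (a1(v), a2(v)) in the first quadrant.
   Strategy 1 splits it among the children, in order and in proportion to subtree sizes, and
   P1 returns a lattice vector whose direction lies inside the wedge of the child. Wedges are
   closed under addition, so the subtree of a child of v is seen from v inside the wedge of
   that child. Disjointness of sibling wedges gives planarity and the order of the children,
   and a line through v separating two sibling wedges makes the tree path between their
   subtrees monotone. The coordinates of P1 are at most (pi/2)/(a2 - a1), so the budget
   (|T_v| - 1)(pi/2)/(a2 - a1), equal to n - 1 at the root, bounds every coordinate. *)

From Stdlib Require Import Reals ZArith List Sorted Lra Lia.
(* Imported after [Reals], which exports another [Zfloor]. *)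
Import ListNotations.
Open Scope R_scope.

Lemma cos_ub_poly a : cos_ub a = 1 - a^2/2 + a^4/24 - a^6/720 + a^8/40320.
Proof.
unfold cos_ub, cos_approx, cos_term; cbn -[Factorial.fact INR pow].
repeat rewrite ?fact_simpl, ?mult_INR; cbn -[pow]; field.
Qed.

Lemma sin_lb_poly a : sin_lb a = a - a^3/6 + a^5/120 - a^7/5040.
Proof.
unfold sin_lb, sin_approx, sin_term; cbn -[Factorial.fact INR pow].
repeat rewrite ?fact_simpl, ?mult_INR; cbn -[pow]; field.
Qed.

(* Taylor bounds [sin x >= x - x^3/6 + ...] and [cos x <= 1 - x^2/2 + ...] suffice on (0, 2). *)
Lemma id_lt_tan x : 0 < x < PI/2 -> x < tan x.
Proof.
intros [Hx0 Hx1].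
assert (HPI := PI2_3_2); assert (HPI4 := PI_4).
assert (Hc : 0 < cos x) by (apply cos_gt_0; lra).
destruct (SIN x) as [Hsin _]; try lra.
destruct (COS x) as [_ Hcos]; try lra.
rewrite sin_lb_poly in Hsin; rewrite cos_ub_poly in Hcos.
unfold tan; apply Rmult_lt_reg_r with (cos x); [exact Hc|].
replace (sin x / cos x * cos x) with (sin x) by (field; lra).
assert (x * cos x <= x * (1 - x^2/2 + x^4/24 - x^6/720 + x^8/40320))
  by (apply Rmult_le_compat_l; lra).
assert (Hx2 : x^2 < 4) by nra.
assert (0 < x^3 * (1/3 - x^2/30 + x^4/840 - x^6/40320)).
{ apply Rmult_lt_0_compat; [apply pow_lt; lra|].
  assert (0 <= x^4) by (apply pow_le; lra).
  assert (x^4 < 16) by nra. assert (x^6 < 64) by nra. lra. }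
nra.
Qed.

Lemma tan_nonneg x : 0 <= x < PI/2 -> 0 <= tan x.
Proof.
intros Hx; destruct (Req_dec x 0) as [->|Hx0].
- rewrite tan_0; lra.
- left; apply tan_gt_0; lra.
Qed.

(* From [tan (t1 + w) = (tan t1 + tan w) / (1 - tan t1 tan w)] and [w < tan w]. *)
Lemma tan_add_gap_lt t1 t2 : 0 <= t1 -> t1 < t2 -> t2 < PI/2 -> tan t1 + (t2 - t1) < tan t2.
Proof.
intros H1 H2 H3; assert (HPI := PI2_3_2).
set (w := t2 - t1); assert (Hw : t2 = t1 + w) by (unfold w; ring).
assert (c1 : 0 < cos t1) by (apply cos_gt_0; lra).
assert (cw : 0 < cos w) by (apply cos_gt_0; unfold w; lra).
assert (c2 : 0 < cos t2) by (apply cos_gt_0; lra).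
assert (Ht1 := tan_nonneg t1 ltac:(lra)).
assert (Htw : w < tan w) by (apply id_lt_tan; unfold w; lra).
assert (Hden : 0 < 1 - tan t1 * tan w).
{ unfold tan.
  replace (1 - sin t1 / cos t1 * (sin w / cos w))
    with ((cos t1 * cos w - sin t1 * sin w) / (cos t1 * cos w)) by (field; lra).
  rewrite <- cos_plus, <- Hw.
  apply Rdiv_lt_0_compat; [lra | apply Rmult_lt_0_compat; lra]. }
rewrite Hw in c2 |- *; rewrite tan_plus by lra.
assert (1 - tan t1 * tan w <= 1) by nra.
apply Rlt_le_trans with (tan t1 + tan w); [lra|].
apply Rmult_le_reg_r with (1 - tan t1 * tan w); [exact Hden|].
replace ((tan t1 + tan w) / (1 - tan t1 * tan w) * (1 - tan t1 * tan w))
  with (tan t1 + tan w) by (field; lra).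
nra.
Qed.

Lemma atan_le_mono x y : x <= y -> atan x <= atan y.
Proof. intros [Hxy|<-]; [left; now apply atan_increasing | lra]. Qed.

Lemma atan_lt_of_lt_tan t s : -(PI/2) < t < PI/2 -> s < tan t -> atan s < t.
Proof. intros Ht Hs; rewrite <- (atan_tan t) by lra; now apply atan_increasing. Qed.

Lemma lt_atan_of_tan_lt t s : -(PI/2) < t < PI/2 -> tan t < s -> t < atan s.
Proof. intros Ht Hs; rewrite <- (atan_tan t) by lra; now apply atan_increasing. Qed.

Lemma atan_half_pos : 0 < atan (1/2).
Proof. rewrite <- atan_0; apply atan_increasing; lra. Qed.

Lemma atan_half_lt_half : atan (1/2) < 1/2.
Proof.
assert (H := atan_bound (1/2)); assert (H0 := atan_half_pos).
rewrite <- (tan_atan (1/2)) at 2; apply id_lt_tan; lra.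
Qed.

(* Machin: [PI/4 = atan (1/2) + atan (1/3)]. *)
Lemma PI4_lt_2_atan_half : PI/4 < 2 * atan (1/2).
Proof.
assert (H := Machin_2_3); replace (1/2) with (/2) by field.
assert (atan (/3) < atan (/2)) by (apply atan_increasing; lra).
lra.
Qed.

Lemma Zceil_spec x : x <= IZR (Zceil x) < x + 1.
Proof.
unfold Zceil; rewrite opp_IZR; destruct (base_Int_part (-x)); lra.
Qed.

Lemma Zfloor_spec x : IZR (Zfloor x) <= x < IZR (Zfloor x) + 1.
Proof. unfold Zfloor; destruct (base_Int_part x); lra. Qed.

Definition wedge (a b : R) (z : R * R) : Prop :=
  0 < fst z /\ 0 < snd z /\ a < atan (snd z / fst z) < b.

Lemma wedge_swap a b x y : wedge a b (x, y) -> wedge (PI/2 - b) (PI/2 - a) (y, x).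
Proof.
unfold wedge; simpl; intros (Hx & Hy & Ha & Hb).
replace (x / y) with (/ (y / x)) by (field; lra).
rewrite atan_inv by (apply Rdiv_lt_0_compat; lra).
repeat split; lra.
Qed.

Lemma le_div_of_mul_le c a w : 0 < w -> c * w <= a -> c <= a / w.
Proof.
intros Hw H; apply Rmult_le_reg_r with w; [exact Hw|].
replace (a / w * w) with a by (field; lra); lra.
Qed.

(* Case (iii) of [P1] below the diagonal: [y/d] overshoots [tan s1] by at most [1/d <= s2 - s1]. *)
Lemma P1_narrow_spec s1 s2 : 0 <= s1 -> s1 < s2 -> s2 <= PI/4 -> s2 - s1 <= atan (1/2) ->
  let d := Zceil (1 / (s2 - s1)) in
  let y := Zfloor (tan s1 * IZR d + 1) in
  (y <= d)%Z /\ IZR d <= (PI/2) / (s2 - s1) /\ wedge s1 s2 (IZR d, IZR y).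
Proof.
intros H1 H2 H3 H4 d y.
assert (HPI := PI2_3_2); assert (HPI4 := PI_4); assert (Ha := atan_half_lt_half).
set (w := s2 - s1) in *; assert (Hw : 0 < w) by (unfold w; lra).
destruct (Zceil_spec (1/w)) as [Hd1 Hd2]; fold d in Hd1, Hd2.
assert (Hinvw : 1/w * w = 1) by (field; lra).
assert (Hd : 1 <= IZR d) by nra.
assert (Ht0 := tan_nonneg s1 ltac:(lra)).
assert (Ht1 : tan s1 < 1) by (rewrite <- tan_PI4; apply tan_increasing; lra).
destruct (Zfloor_spec (tan s1 * IZR d + 1)) as [Hy1 Hy2]; fold y in Hy1, Hy2.
assert (Hy : 0 < IZR y) by nra.
assert (Hyd : (y <= d)%Z) by (apply Zlt_succ_le, lt_IZR; rewrite succ_IZR; nra).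
split; [exact Hyd|]. split; [apply le_div_of_mul_le; nra|].
unfold wedge; cbn [fst snd]; split; [lra|]. split; [exact Hy|]. split.
- apply lt_atan_of_tan_lt; [lra|].
  apply Rmult_lt_reg_r with (IZR d); [lra|].
  replace (IZR y / IZR d * IZR d) with (IZR y) by (field; lra); lra.
- apply atan_lt_of_lt_tan; [lra|].
  assert (Hgap := tan_add_gap_lt s1 s2 H1 H2 ltac:(lra)); fold w in Hgap.
  assert (1 / IZR d <= w).
  { apply Rmult_le_reg_r with (IZR d); [lra|].
    replace (1 / IZR d * IZR d) with 1 by (field; lra); nra. }
  assert (IZR y / IZR d <= tan s1 + 1 / IZR d).
  { apply Rmult_le_reg_r with (IZR d); [lra|].
    replace ((tan s1 + 1 / IZR d) * IZR d) with (tan s1 * IZR d + 1) by (field; lra).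
    replace (IZR y / IZR d * IZR d) with (IZR y) by (field; lra); lra. }
  lra.
Qed.

Lemma P1_spec t1 t2 : 0 <= t1 -> t1 < t2 -> t2 <= PI/2 ->
  IZR (fst (P1 t1 t2)) <= (PI/2) / (t2 - t1) /\
  IZR (snd (P1 t1 t2)) <= (PI/2) / (t2 - t1) /\
  wedge t1 t2 (IZR (fst (P1 t1 t2)), IZR (snd (P1 t1 t2))).
Proof.
intros H1 H2 H3.
assert (HPI := PI2_3_2); assert (HPI4 := PI_4); assert (Ha := atan_half_lt_half).
assert (Hb := PI4_lt_2_atan_half); assert (Hc := atan_half_pos).
assert (Hw : 0 < t2 - t1) by lra.
assert (Hdiag : atan (1/1) = PI/4) by (replace (1/1) with 1 by field; apply atan_1).
assert (Hsteep : atan (2/1) = PI/2 - atan (1/2))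
  by (replace (2/1) with (/ (1/2)) by field; apply atan_inv; lra).
unfold P1.
destruct (Rlt_dec (PI/4) (t2 - t1)).
{ unfold wedge; simpl; rewrite Hdiag.
  repeat split; try lra; apply le_div_of_mul_le; lra. }
destruct (Rlt_dec (atan (1/2)) (t2 - t1)).
{ destruct (Rle_dec (PI/4) t1); [|destruct (Rle_dec (atan (1/2)) t1)];
    unfold wedge; simpl; rewrite ?Hdiag, ?Hsteep;
    repeat split; try lra; apply le_div_of_mul_le; lra. }
destruct (Rle_dec t2 (PI/4)).
{ destruct (P1_narrow_spec t1 t2 H1 H2 r ltac:(lra)) as (Hyd & Hd & Hwd); simpl.
  apply IZR_le in Hyd; split; [lra | split; [lra | exact Hwd]]. }
destruct (Rlt_dec t1 (PI/4)).
{ unfold wedge; simpl; rewrite Hdiag.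
  repeat split; try lra; apply le_div_of_mul_le; lra. }
destruct (P1_narrow_spec (PI/2 - t2) (PI/2 - t1) ltac:(lra) ltac:(lra) ltac:(lra) ltac:(lra))
  as (Hxd & Hd & Hwd).
replace (PI/2 - t1 - (PI/2 - t2)) with (t2 - t1) in * by ring.
apply IZR_le in Hxd; apply wedge_swap in Hwd.
replace (PI/2 - (PI/2 - t1)) with t1 in Hwd by ring.
replace (PI/2 - (PI/2 - t2)) with t2 in Hwd by ring.
simpl; split; [lra | split; [lra | exact Hwd]].
Qed.

Lemma wedge_mono a b a' b' z : a <= a' -> b' <= b -> wedge a' b' z -> wedge a b z.
Proof. unfold wedge; intros; lra. Qed.

Lemma wedge_disjoint a b a' b' z : b <= a' -> wedge a b z -> wedge a' b' z -> False.
Proof. unfold wedge; intros; lra. Qed.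

Lemma slope_lt_of_wedge_lt a b a' b' x1 y1 x2 y2 : b <= a' ->
  wedge a b (x1, y1) -> wedge a' b' (x2, y2) -> y1 / x1 < y2 / x2.
Proof.
unfold wedge; simpl; intros Hb (_ & _ & _ & H1) (_ & _ & H2 & _).
destruct (Rlt_le_dec (y1 / x1) (y2 / x2)) as [|Hle]; [assumption|].
apply atan_le_mono in Hle; lra.
Qed.

Lemma mediant_between x1 y1 x2 y2 : 0 < x1 -> 0 < x2 -> y1 / x1 <= y2 / x2 ->
  y1 / x1 <= (y1 + y2) / (x1 + x2) <= y2 / x2.
Proof.
intros H1 H2 H.
assert (Hcross : y1 * x2 <= y2 * x1).
{ apply Rmult_le_compat_r with (r := x1 * x2) in H; [|nra].
  replace (y1 / x1 * (x1 * x2)) with (y1 * x2) in H by (field; lra).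
  replace (y2 / x2 * (x1 * x2)) with (y2 * x1) in H by (field; lra). exact H. }
split.
- apply Rmult_le_reg_r with (x1 * (x1 + x2)); [nra|].
  replace (y1 / x1 * (x1 * (x1 + x2))) with (y1 * (x1 + x2)) by (field; lra).
  replace ((y1 + y2) / (x1 + x2) * (x1 * (x1 + x2))) with ((y1 + y2) * x1) by (field; lra).
  nra.
- apply Rmult_le_reg_r with (x2 * (x1 + x2)); [nra|].
  replace (y2 / x2 * (x2 * (x1 + x2))) with (y2 * (x1 + x2)) by (field; lra).
  replace ((y1 + y2) / (x1 + x2) * (x2 * (x1 + x2))) with ((y1 + y2) * x2) by (field; lra).
  nra.
Qed.

(* The slope of a sum lies between the slopes of the summands. *)
Lemma wedge_add a b x1 y1 x2 y2 :
  wedge a b (x1, y1) -> wedge a b (x2, y2) -> wedge a b (x1 + x2, y1 + y2).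
Proof.
unfold wedge; simpl; intros (H1 & H2 & H3) (H4 & H5 & H6).
split; [lra|]. split; [lra|].
destruct (Rle_dec (y1 / x1) (y2 / x2)) as [Hle|Hgt].
- destruct (mediant_between x1 y1 x2 y2 H1 H4 Hle) as [m1 m2].
  apply atan_le_mono in m1; apply atan_le_mono in m2; lra.
- destruct (mediant_between x2 y2 x1 y1 H4 H1 ltac:(lra)) as [m1 m2].
  rewrite (Rplus_comm x1), (Rplus_comm y1).
  apply atan_le_mono in m1; apply atan_le_mono in m2; lra.
Qed.

Lemma wedge_scale a b l x y : 0 < l -> wedge a b (x, y) -> wedge a b (l * x, l * y).
Proof.
unfold wedge; simpl; intros Hl (H1 & H2 & H3).
replace (l * y / (l * x)) with (y / x) by (field; lra).
repeat split; nra.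
Qed.

Lemma wedge_cross_pos a b a' b' x1 y1 x2 y2 : b <= a' ->
  wedge a b (x1, y1) -> wedge a' b' (x2, y2) -> 0 < x1 * y2 - y1 * x2.
Proof.
intros Hb W1 W2.
assert (Hs := slope_lt_of_wedge_lt _ _ _ _ _ _ _ _ Hb W1 W2).
destruct W1 as (H1 & _); destruct W2 as (H2 & _); simpl in H1, H2.
apply Rmult_lt_compat_r with (r := x1 * x2) in Hs; [|nra].
replace (y1 / x1 * (x1 * x2)) with (y1 * x2) in Hs by (field; lra).
replace (y2 / x2 * (x1 * x2)) with (y2 * x1) in Hs by (field; lra).
lra.
Qed.

Lemma wedge_above_ray b c x y : 0 <= b <= PI/2 -> wedge b c (x, y) ->
  0 < y * cos b - x * sin b.
Proof.
unfold wedge; simpl; intros Hb (H1 & H2 & H3 & H4).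
assert (Hat := atan_bound (y / x)).
assert (Hc : 0 < cos b) by (apply cos_gt_0; lra).
assert (Htan : tan b < y / x).
{ destruct (Rlt_le_dec (tan b) (y / x)) as [|Hle]; [assumption|].
  apply atan_le_mono in Hle; rewrite atan_tan in Hle by lra; lra. }
unfold tan in Htan.
apply Rmult_lt_compat_r with (r := x * cos b) in Htan; [|nra].
replace (sin b / cos b * (x * cos b)) with (x * sin b) in Htan by (field; lra).
replace (y / x * (x * cos b)) with (y * cos b) in Htan by (field; lra).
lra.
Qed.

Lemma wedge_below_ray a b x y : 0 <= b <= PI/2 -> wedge a b (x, y) ->
  y * cos b - x * sin b < 0.
Proof.
unfold wedge; simpl; intros Hb (H1 & H2 & H3 & H4).
assert (Hat := atan_bound (y / x)).
destruct (Req_dec b (PI/2)) as [->|Hb2].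
{ rewrite cos_PI2, sin_PI2; lra. }
assert (Hc : 0 < cos b) by (apply cos_gt_0; lra).
assert (Htan : y / x < tan b).
{ destruct (Rlt_le_dec (y / x) (tan b)) as [|Hle]; [assumption|].
  apply atan_le_mono in Hle; rewrite atan_tan in Hle by lra; lra. }
unfold tan in Htan.
apply Rmult_lt_compat_r with (r := x * cos b) in Htan; [|nra].
replace (sin b / cos b * (x * cos b)) with (x * sin b) in Htan by (field; lra).
replace (y / x * (x * cos b)) with (y * cos b) in Htan by (field; lra).
lra.
Qed.

Definition size_sum (ts : list tree) : nat := list_sum (map tsize ts).

Lemma tsize_pos t : (1 <= tsize t)%nat.
Proof. destruct t; simpl; lia. Qed.

Lemma tsize_Node_pred ts : INR (tsize (Node ts)) - 1 = INR (size_sum ts).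
Proof. simpl tsize; rewrite S_INR; unfold size_sum; ring. Qed.

Lemma size_sum_firstn_mono ts k m : (k <= m)%nat ->
  (size_sum (firstn k ts) <= size_sum (firstn m ts))%nat.
Proof.
unfold size_sum; revert k m; induction ts as [|c ts IH]; intros [|k] [|m] H; simpl; try lia.
specialize (IH k m ltac:(lia)); lia.
Qed.

Lemma size_sum_firstn_le ts k : (size_sum (firstn k ts) <= size_sum ts)%nat.
Proof.
destruct (Nat.le_ge_cases k (length ts)).
- rewrite <- (firstn_all ts) at 2; now apply size_sum_firstn_mono.
- now rewrite firstn_all2.
Qed.

Lemma size_sum_firstn_S ts i c : nth_error ts i = Some c ->
  size_sum (firstn (S i) ts) = (size_sum (firstn i ts) + tsize c)%nat.
Proof.
unfold size_sum; revert i; induction ts as [|c0 ts IH]; intros [|i] H; simpl in *;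
  try discriminate.
- injection H as ->; lia.
- rewrite (IH i H); lia.
Qed.

Lemma child_angles_length a1 a2 nu st ts : length (child_angles a1 a2 nu st ts) = length ts.
Proof. revert st; induction ts; simpl; auto. Qed.

Lemma child_angles_nth a1 a2 nu ts st i c b :
  nth_error ts i = Some c -> nth_error (child_angles a1 a2 nu st ts) i = Some b ->
  b = (st + (a2 - a1) * INR (size_sum (firstn i ts)) / (nu - 1),
       st + (a2 - a1) * INR (size_sum (firstn (S i) ts)) / (nu - 1)).
Proof.
unfold size_sum; revert st i; induction ts as [|c0 ts IH]; intros st [|i] H1 H2; simpl in *;
  try discriminate.
- injection H1 as ->; injection H2 as <-; rewrite Nat.add_0_r; f_equal; unfold Rdiv; ring.
- rewrite (IH _ i H1 H2); f_equal; rewrite plus_INR; unfold Rdiv; ring.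
Qed.

Definition budget (t : tree) (a1 a2 : R) : R := (INR (tsize t) - 1) * (PI/2) / (a2 - a1).

(* The angle of a child is proportional to its size, so the budget of [Node ts] is exactly
   the budget of the child plus the coordinate bound [(PI/2)/(b2 - b1)] of [P1 b1 b2]. *)
Lemma child_angles_nested_budget ts a1 a2 i c b1 b2 :
  0 <= a1 -> a1 < a2 -> nth_error ts i = Some c ->
  nth_error (child_angles a1 a2 (INR (tsize (Node ts))) a1 ts) i = Some (b1, b2) ->
  a1 <= b1 /\ b1 < b2 /\ b2 <= a2 /\
  budget c b1 b2 + (PI/2) / (b2 - b1) = budget (Node ts) a1 a2.
Proof.
intros Ha1 Ha2 Hc Hb.
pose proof (child_angles_nth _ _ _ _ _ _ _ _ Hc Hb) as E.
rewrite tsize_Node_pred, (size_sum_firstn_S _ _ _ Hc), plus_INR in E.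
injection E as E1 E2.
assert (Htot := size_sum_firstn_le ts (S i)).
rewrite (size_sum_firstn_S _ _ _ Hc) in Htot; apply le_INR in Htot; rewrite plus_INR in Htot.
assert (Hsz := tsize_pos c); apply le_INR in Hsz; simpl in Hsz.
set (P := INR (size_sum (firstn i ts))) in *; set (T := INR (size_sum ts)) in *;
  set (sz := INR (tsize c)) in *.
assert (HP : 0 <= P) by apply pos_INR.
assert (HT : 0 < T) by lra.
set (u := (a2 - a1) / T).
assert (Hu : 0 < u) by (unfold u; apply Rdiv_lt_0_compat; lra).
assert (E1' : b1 = a1 + u * P) by (rewrite E1; unfold u, Rdiv; ring).
assert (E2' : b2 = a1 + u * (P + sz)) by (rewrite E2; unfold u, Rdiv; ring).
assert (HuT : u * T = a2 - a1) by (unfold u; field; lra).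
split; [nra|]. split; [nra|]. split; [nra|].
unfold budget; rewrite tsize_Node_pred; fold T sz.
replace (b2 - b1) with (u * sz) by (rewrite E1', E2'; ring).
rewrite <- HuT; field; lra.
Qed.

Lemma child_angles_ordered ts a1 a2 i j ci cj bi1 bi2 bj1 bj2 :
  a1 < a2 -> (i < j)%nat -> nth_error ts i = Some ci -> nth_error ts j = Some cj ->
  nth_error (child_angles a1 a2 (INR (tsize (Node ts))) a1 ts) i = Some (bi1, bi2) ->
  nth_error (child_angles a1 a2 (INR (tsize (Node ts))) a1 ts) j = Some (bj1, bj2) ->
  bi2 <= bj1.
Proof.
intros Ha Hij Hci Hcj Hbi Hbj.
pose proof (child_angles_nth _ _ _ _ _ _ _ _ Hci Hbi) as E.
pose proof (child_angles_nth _ _ _ _ _ _ _ _ Hcj Hbj) as F.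
rewrite tsize_Node_pred, (size_sum_firstn_S _ _ _ Hci) in E; rewrite tsize_Node_pred in F.
injection E as _ E2; injection F as F1 _.
assert (Hle := size_sum_firstn_mono ts (S i) j Hij).
assert (Htot := size_sum_firstn_le ts (S i)).
rewrite (size_sum_firstn_S _ _ _ Hci) in Hle, Htot.
apply le_INR in Hle, Htot; rewrite plus_INR in Hle, Htot.
assert (Hsz := tsize_pos ci); apply le_INR in Hsz; simpl in Hsz.
assert (0 <= INR (size_sum (firstn i ts))) by apply pos_INR.
rewrite E2, F1, plus_INR; apply Rplus_le_compat_l; unfold Rdiv.
apply Rmult_le_compat_r; [left; apply Rinv_0_lt_compat; lra|].
apply Rmult_le_compat_l; lra.
Qed.

(* A vertex v during Algorithm 1: T_v, a1(v), a2(v) and the position of v. *)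
Record state := State { st_tree : tree; st_a1 : R; st_a2 : R; st_x : Z; st_y : Z }.

Definition st_pos (s : state) : Z * Z := (st_x s, st_y s).

Definition st_budget (s : state) : R := budget (st_tree s) (st_a1 s) (st_a2 s).

Definition valid_angles (s : state) : Prop := 0 <= st_a1 s /\ st_a1 s < st_a2 s /\ st_a2 s <= PI/2.

Fixpoint descend (s : state) (p : list nat) : option state :=
  match p with
  | [] => Some s
  | i :: p' =>
      match st_tree s with Node ts =>
        match nth_error ts i,
              nth_error (child_angles (st_a1 s) (st_a2 s) (INR (tsize (st_tree s))) (st_a1 s) ts) i
        with
        | Some c, Some (b1, b2) =>
            let (dx, dy) := P1 b1 b2 in descend (State c b1 b2 (st_x s + dx) (st_y s + dy)) p'
        | _, _ => None
        end
      end
  end.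

Definition root_state (t : tree) : state := State t 0 (PI/2) 0 0.

Lemma place_descend t a1 a2 x y p q s : descend (State t a1 a2 x y) p = Some s ->
  place t a1 a2 x y (p ++ q) = place (st_tree s) (st_a1 s) (st_a2 s) (st_x s) (st_y s) q.
Proof.
revert t a1 a2 x y; induction p as [|i p IH]; intros [ts] a1 a2 x y H; simpl in *.
- now injection H as <-.
- destruct (nth_error ts i) as [c|]; [|discriminate].
  destruct (nth_error _ i) as [[b1 b2]|]; [|discriminate].
  destruct (P1 b1 b2); now apply IH.
Qed.

Lemma algorithm1_descend t p s : descend (root_state t) p = Some s -> algorithm1 t p = st_pos s.
Proof.
intros H; unfold algorithm1; rewrite <- (app_nil_r p).
now rewrite (place_descend _ _ _ _ _ _ _ _ H).
Qed.

Lemma descend_app s p q :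
  descend s (p ++ q) = match descend s p with Some s' => descend s' q | None => None end.
Proof.
revert s; induction p as [|i p IH]; intros [[ts] a1 a2 x y]; simpl; [reflexivity|].
destruct (nth_error ts i) as [c|]; [|reflexivity].
destruct (nth_error _ i) as [[b1 b2]|]; [|reflexivity].
destruct (P1 b1 b2); apply IH.
Qed.

Lemma descend_cons s i p :
  descend s (i :: p) = match descend s [i] with Some c => descend c p | None => None end.
Proof. exact (descend_app s [i] p). Qed.

Lemma descend_snoc s p k :
  descend s (p ++ [k]) = match descend s p with Some s' => descend s' [k] | None => None end.
Proof. apply descend_app. Qed.

Lemma subtree_descend s p : subtree (st_tree s) p = option_map st_tree (descend s p).
Proof.
revert s; induction p as [|i p IH]; intros [[ts] a1 a2 x y]; simpl; [reflexivity|].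
destruct (nth_error ts i) as [c|] eqn:Ec; [|reflexivity].
destruct (nth_error (child_angles _ _ _ _ _) i) as [[b1 b2]|] eqn:Eb.
- destruct (P1 b1 b2); apply (IH (State _ _ _ _ _)).
- apply nth_error_None in Eb; rewrite child_angles_length in Eb.
  assert (i < length ts)%nat by (apply nth_error_Some; congruence); lia.
Qed.

Lemma is_vertex_descend s p : is_vertex (st_tree s) p <-> exists s', descend s p = Some s'.
Proof.
unfold is_vertex; rewrite subtree_descend.
destruct (descend s p); simpl; split; try congruence; eauto.
intros [? ?]; discriminate.
Qed.

Lemma is_vertex_app_l t p q : is_vertex t (p ++ q) -> is_vertex t p.
Proof.
change t with (st_tree (root_state t)); rewrite !is_vertex_descend, descend_app.
destruct (descend _ p); [eauto | intros [? ?]; discriminate].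
Qed.

Lemma is_vertex_removelast t c : is_vertex t c -> is_vertex t (removelast c).
Proof.
intros H; destruct c as [|a c]; [exact H|].
rewrite (app_removelast_last 0%nat (l := a :: c)) in H by discriminate.
exact (is_vertex_app_l _ _ _ H).
Qed.

Lemma descend_child s i c : descend s [i] = Some c ->
  exists ts, st_tree s = Node ts /\ nth_error ts i = Some (st_tree c) /\
    nth_error (child_angles (st_a1 s) (st_a2 s) (INR (tsize (Node ts))) (st_a1 s) ts) i
      = Some (st_a1 c, st_a2 c) /\
    st_pos c = (st_x s + fst (P1 (st_a1 c) (st_a2 c)), st_y s + snd (P1 (st_a1 c) (st_a2 c)))%Z.
Proof.
destruct s as [[ts] a1 a2 x y]; simpl.
destruct (nth_error ts i) as [c'|] eqn:Ec; [|discriminate].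
destruct (nth_error (child_angles _ _ _ _ _) i) as [[b1 b2]|] eqn:Eb; [|discriminate].
destruct (P1 b1 b2) as [dx dy] eqn:E; intros H; injection H as <-.
exists ts; simpl; rewrite E; auto.
Qed.

Lemma child_exists s i j cj : (i < j)%nat -> descend s [j] = Some cj ->
  exists ci, descend s [i] = Some ci.
Proof.
intros Hij Hj; apply is_vertex_descend.
destruct (descend_child _ _ _ Hj) as (ts & Hts & Hc & _).
unfold is_vertex; rewrite Hts; simpl.
destruct (nth_error ts i) eqn:Ei; [discriminate|].
apply nth_error_None in Ei.
assert (j < length ts)%nat by (apply nth_error_Some; congruence); lia.
Qed.

Definition vec (P Q : Z * Z) : R * R := (IZR (fst Q) - IZR (fst P), IZR (snd Q) - IZR (snd P)).

Lemma wedge_vec_trans a b P Q S :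
  wedge a b (vec P Q) -> wedge a b (vec Q S) -> wedge a b (vec P S).
Proof.
unfold vec; intros H1 H2; pose proof (wedge_add _ _ _ _ _ _ H1 H2) as H.
replace (IZR (fst S) - IZR (fst P)) with (IZR (fst Q) - IZR (fst P) + (IZR (fst S) - IZR (fst Q)))
  by ring.
replace (IZR (snd S) - IZR (snd P)) with (IZR (snd Q) - IZR (snd P) + (IZR (snd S) - IZR (snd Q)))
  by ring.
exact H.
Qed.

Lemma child_nested s i c : valid_angles s -> descend s [i] = Some c ->
  st_a1 s <= st_a1 c /\ st_a2 c <= st_a2 s /\ valid_angles c /\
  st_budget c + (PI/2) / (st_a2 c - st_a1 c) = st_budget s.
Proof.
intros (H0 & H1 & H2) Hc; destruct (descend_child _ _ _ Hc) as (ts & Hts & Ec & Eb & _).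
destruct (child_angles_nested_budget _ _ _ _ _ _ _ H0 H1 Ec Eb) as (F1 & F2 & F3 & F4).
unfold st_budget, valid_angles; rewrite Hts; repeat split; lra.
Qed.

Lemma child_step s i c : valid_angles s -> descend s [i] = Some c ->
  wedge (st_a1 c) (st_a2 c) (vec (st_pos s) (st_pos c)) /\
  IZR (st_x c) - IZR (st_x s) <= (PI/2) / (st_a2 c - st_a1 c) /\
  IZR (st_y c) - IZR (st_y s) <= (PI/2) / (st_a2 c - st_a1 c).
Proof.
intros Hs Hc; destruct (child_nested _ _ _ Hs Hc) as (_ & _ & (G1 & G2 & G3) & _).
destruct (descend_child _ _ _ Hc) as (_ & _ & _ & _ & Hpos).
unfold st_pos in Hpos; injection Hpos as Ex Ey.
destruct (P1_spec _ _ G1 G2 G3) as (Bx & By & W).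
unfold vec, st_pos; simpl; rewrite Ex, Ey, !plus_IZR.
replace (IZR (st_x s) + IZR (fst (P1 (st_a1 c) (st_a2 c))) - IZR (st_x s))
  with (IZR (fst (P1 (st_a1 c) (st_a2 c)))) by ring.
replace (IZR (st_y s) + IZR (snd (P1 (st_a1 c) (st_a2 c))) - IZR (st_y s))
  with (IZR (snd (P1 (st_a1 c) (st_a2 c)))) by ring.
auto.
Qed.

Lemma children_ordered s i j ci cj : valid_angles s -> (i < j)%nat ->
  descend s [i] = Some ci -> descend s [j] = Some cj -> st_a2 ci <= st_a1 cj.
Proof.
intros (_ & Hs & _) Hij Hi Hj.
destruct (descend_child _ _ _ Hi) as (ts & Hts & Eci & Ebi & _).
destruct (descend_child _ _ _ Hj) as (ts' & Hts' & Ecj & Ebj & _).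
rewrite Hts in Hts'; injection Hts' as <-.
exact (child_angles_ordered _ _ _ _ _ _ _ _ _ _ _ Hs Hij Eci Ecj Ebi Ebj).
Qed.

Lemma children_separated s i j ci cj : valid_angles s -> i <> j ->
  descend s [i] = Some ci -> descend s [j] = Some cj ->
  st_a2 ci <= st_a1 cj \/ st_a2 cj <= st_a1 ci.
Proof.
intros Hs Hij Hi Hj; destruct (Nat.lt_gt_cases i j) as [[Hlt|Hgt] _]; [exact Hij| |].
- left; exact (children_ordered _ _ _ _ _ Hs Hlt Hi Hj).
- right; exact (children_ordered _ _ _ _ _ Hs Hgt Hj Hi).
Qed.

Lemma descend_nested s p s' : valid_angles s -> descend s p = Some s' ->
  valid_angles s' /\ st_a1 s <= st_a1 s' /\ st_a2 s' <= st_a2 s.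
Proof.
revert s; induction p as [|i p IH]; intros s Hs H.
- injection H as <-; repeat split; try apply Hs; lra.
- rewrite descend_cons in H; destruct (descend s [i]) as [c|] eqn:Hc; [|discriminate].
  destruct (child_nested _ _ _ Hs Hc) as (N1 & N2 & Nc & _).
  destruct (IH c Nc H) as (V & M1 & M2); split; [exact V | lra].
Qed.

(* Each edge uses at most its share of the budget, which starts at [n - 1] at the root. *)
Lemma descend_budget s p s' : valid_angles s -> descend s p = Some s' ->
  (st_x s <= st_x s')%Z /\ (st_y s <= st_y s')%Z /\
  IZR (st_x s') - IZR (st_x s) + st_budget s' <= st_budget s /\
  IZR (st_y s') - IZR (st_y s) + st_budget s' <= st_budget s.
Proof.
revert s; induction p as [|i p IH]; intros s Hs H.
- injection H as <-; repeat split; lia || lra.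
- rewrite descend_cons in H; destruct (descend s [i]) as [c|] eqn:Hc; [|discriminate].
  destruct (child_nested _ _ _ Hs Hc) as (_ & _ & Nc & NB).
  destruct (child_step _ _ _ Hs Hc) as ((Wx & Wy & _) & Bx & By); unfold vec in Wx, Wy.
  simpl in Wx, Wy.
  destruct (IH c Nc H) as (I1 & I2 & I3 & I4).
  assert (st_x s < st_x c)%Z by (apply lt_IZR; lra).
  assert (st_y s < st_y c)%Z by (apply lt_IZR; lra).
  repeat split; lia || lra.
Qed.

Lemma edge_in_wedge s p sa k sb : valid_angles s ->
  descend s p = Some sa -> descend sa [k] = Some sb ->
  wedge (st_a1 s) (st_a2 s) (vec (st_pos sa) (st_pos sb)).
Proof.
intros Hs Ha Hb; destruct (descend_nested _ _ _ Hs Ha) as (Va & M1 & M2).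
destruct (child_nested _ _ _ Va Hb) as (N1 & N2 & _).
destruct (child_step _ _ _ Va Hb) as (W & _).
apply (wedge_mono _ _ _ _ _ (Rle_trans _ _ _ M1 N1) (Rle_trans _ _ _ N2 M2) W).
Qed.

Lemma branch_wedge s i c r s' : valid_angles s -> descend s [i] = Some c ->
  descend c r = Some s' -> wedge (st_a1 c) (st_a2 c) (vec (st_pos s) (st_pos s')).
Proof.
intros Hs Hc; destruct (child_nested _ _ _ Hs Hc) as (_ & _ & Vc & _).
revert s'; induction r as [|k r IH] using rev_ind; intros s' Hr.
- injection Hr as <-; exact (proj1 (child_step _ _ _ Hs Hc)).
- rewrite descend_snoc in Hr; destruct (descend c r) as [sa|] eqn:Ha; [|discriminate].
  exact (wedge_vec_trans _ _ _ _ _ (IH sa eq_refl) (edge_in_wedge _ _ _ _ _ Vc Ha Hr)).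
Qed.

Lemma valid_root t : valid_angles (root_state t).
Proof. assert (H := PI_RGT_0); unfold valid_angles; simpl; lra. Qed.

Lemma vertex_state t p : is_vertex t p -> exists s,
  descend (root_state t) p = Some s /\ algorithm1 t p = st_pos s /\ valid_angles s.
Proof.
change t with (st_tree (root_state t)) at 1; intros H.
destruct (proj1 (is_vertex_descend _ _) H) as [s Hs].
exists s; split; [exact Hs|]; split; [exact (algorithm1_descend _ _ _ Hs)|].
exact (proj1 (descend_nested _ _ _ (valid_root t) Hs)).
Qed.

Lemma st_budget_nonneg s : valid_angles s -> 0 <= st_budget s.
Proof.
intros (_ & H & _); unfold st_budget, budget.
assert (1 <= INR (tsize (st_tree s))) by (apply (le_INR 1), tsize_pos).
assert (HPI := PI_RGT_0).
apply Rmult_le_pos; [nra | left; apply Rinv_0_lt_compat; lra].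
Qed.

Lemma algorithm1_in_grid t p : is_vertex t p ->
  (0 <= fst (algorithm1 t p) <= Z.of_nat (tsize t) - 1)%Z /\
  (0 <= snd (algorithm1 t p) <= Z.of_nat (tsize t) - 1)%Z.
Proof.
intros H; destruct (vertex_state t p H) as (s & Hs & -> & Vs).
destruct (descend_budget _ _ _ (valid_root t) Hs) as (Lx & Ly & Bx & By).
assert (Hroot : st_budget (root_state t) = IZR (Z.of_nat (tsize t) - 1)).
{ unfold st_budget, budget; simpl; rewrite minus_IZR, <- INR_IZR_INZ.
  assert (HPI := PI_RGT_0); field; lra. }
assert (HB := st_budget_nonneg s Vs); rewrite Hroot in Bx, By; simpl in *.
assert (IZR (st_x s) <= IZR (Z.of_nat (tsize t) - 1)) by lra.
assert (IZR (st_y s) <= IZR (Z.of_nat (tsize t) - 1)) by lra.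
apply le_IZR in H0, H1; lia.
Qed.

Lemma algorithm1_respects_order t : respects_order t (algorithm1 t).
Proof.
intros u i j Hj Hij; cbv zeta.
destruct (vertex_state t u (is_vertex_app_l _ _ _ Hj)) as (su & Hsu & -> & Vu).
destruct (vertex_state t _ Hj) as (sj & Hsj & -> & _).
rewrite descend_app, Hsu in Hsj.
destruct (child_exists _ _ _ _ Hij Hsj) as [si Hsi].
rewrite (algorithm1_descend t (u ++ [i]) si) by (rewrite descend_app, Hsu; exact Hsi).
destruct (child_step _ _ _ Vu Hsi) as (Wi & _).
destruct (child_step _ _ _ Vu Hsj) as (Wj & _).
assert (Hcross := wedge_cross_pos _ _ _ _ _ _ _ _ (children_ordered _ _ _ _ _ Vu Hij Hsi Hsj) Wi Wj).
unfold st_pos; simpl; apply Z.lt_gt, lt_IZR.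
rewrite minus_IZR, !mult_IZR, !minus_IZR; exact Hcross.
Qed.

Lemma common_prefix_split (u v : list nat) : exists w r1 r2, u = w ++ r1 /\ v = w ++ r2 /\
  (r1 = [] \/ r2 = [] \/ exists i j r1' r2', r1 = i :: r1' /\ r2 = j :: r2' /\ i <> j).
Proof.
revert v; induction u as [|a u IH]; intros v.
- exists [], [], v; auto.
- destruct v as [|b v]; [exists [], (a :: u), []; auto|].
  destruct (Nat.eq_dec a b) as [<-|Hab].
  + destruct (IH v) as (w & r1 & r2 & -> & -> & H); exists (a :: w), r1, r2; auto.
  + exists [], (a :: u), (b :: v); do 2 (split; [reflexivity|]).
    right; right; exists a, b, u, v; auto.
Qed.

Lemma descendant_wedge s i r s' : valid_angles s -> descend s (i :: r) = Some s' ->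
  exists c, descend s [i] = Some c /\ wedge (st_a1 c) (st_a2 c) (vec (st_pos s) (st_pos s')).
Proof.
intros Hs H; rewrite descend_cons in H.
destruct (descend s [i]) as [c|] eqn:Hc; [|discriminate].
exists c; split; [reflexivity | exact (branch_wedge _ _ _ _ _ Hs Hc H)].
Qed.

Lemma wedge_vec_neq a b P Q : wedge a b (vec P Q) -> P <> Q.
Proof. unfold wedge, vec; intros (H & _) ->; simpl in H; lra. Qed.

(* Two vertices are either in ancestor relation, separated by a wedge with positive
   coordinates, or in the disjoint wedges of two distinct children of their common ancestor. *)
Lemma algorithm1_injective t u v : is_vertex t u -> is_vertex t v ->
  algorithm1 t u = algorithm1 t v -> u = v.
Proof.
intros Hu Hv Heq.
destruct (common_prefix_split u v) as (w & r1 & r2 & -> & -> & Hc).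
destruct (vertex_state t w (is_vertex_app_l _ _ _ Hu)) as (sw & Hsw & _ & Vw).
destruct (vertex_state t _ Hu) as (su & Hsu & Hpu & _).
destruct (vertex_state t _ Hv) as (sv & Hsv & Hpv & _).
rewrite descend_app, Hsw in Hsu, Hsv; rewrite Hpu, Hpv in Heq.
destruct Hc as [->|[->|(i & j & r1' & r2' & -> & -> & Hij)]].
- destruct r2 as [|j r2]; [reflexivity | exfalso].
  injection Hsu as <-; destruct (descendant_wedge _ _ _ _ Vw Hsv) as (c & _ & W).
  exact (wedge_vec_neq _ _ _ _ W Heq).
- destruct r1 as [|i r1]; [reflexivity | exfalso].
  injection Hsv as <-; destruct (descendant_wedge _ _ _ _ Vw Hsu) as (c & _ & W).
  exact (wedge_vec_neq _ _ _ _ W (eq_sym Heq)).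
- exfalso.
  destruct (descendant_wedge _ _ _ _ Vw Hsu) as (ci & Hci & Wi).
  destruct (descendant_wedge _ _ _ _ Vw Hsv) as (cj & Hcj & Wj).
  rewrite Heq in Wi.
  destruct (children_separated _ _ _ _ _ Vw Hij Hci Hcj) as [Ho|Ho].
  + exact (wedge_disjoint _ _ _ _ _ Ho Wi Wj).
  + exact (wedge_disjoint _ _ _ _ _ Ho Wj Wi).
Qed.

Lemma wedge_segment_point a b P A B l : 0 <= l ->
  wedge a b (vec P A) -> wedge a b (vec A B) ->
  wedge a b (IZR (fst A) + l * (IZR (fst B) - IZR (fst A)) - IZR (fst P),
             IZR (snd A) + l * (IZR (snd B) - IZR (snd A)) - IZR (snd P)).
Proof.
unfold vec; intros Hl WA WB; destruct (Req_dec l 0) as [->|Hl0].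
- replace (IZR (fst A) + 0 * (IZR (fst B) - IZR (fst A)) - IZR (fst P))
    with (IZR (fst A) - IZR (fst P)) by ring.
  replace (IZR (snd A) + 0 * (IZR (snd B) - IZR (snd A)) - IZR (snd P))
    with (IZR (snd A) - IZR (snd P)) by ring.
  exact WA.
- pose proof (wedge_add _ _ _ _ _ _ WA (wedge_scale _ _ l _ _ ltac:(lra) WB)) as W.
  match type of W with wedge _ _ (?x, ?y) => replace x with
    (IZR (fst A) + l * (IZR (fst B) - IZR (fst A)) - IZR (fst P)) in W by ring;
    replace y with (IZR (snd A) + l * (IZR (snd B) - IZR (snd A)) - IZR (snd P)) in W by ring end.
  exact W.
Qed.

Lemma branch_segment_point s i c r sa sb q : valid_angles s -> descend s [i] = Some c ->
  descend s (removelast (i :: r)) = Some sa -> descend s (i :: r) = Some sb ->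
  on_seg q (st_pos sa) (st_pos sb) ->
  wedge (st_a1 c) (st_a2 c) (fst q - IZR (st_x s), snd q - IZR (st_y s)) \/
  (r = [] /\ q = pt (st_pos s)).
Proof.
intros Hs Hc Ha Hb (l & Hl & Hqx & Hqy).
destruct q as [qx qy]; simpl in Hqx, Hqy |- *; subst qx qy.
destruct r as [|k r _] using rev_ind.
- injection Ha as <-; rewrite Hc in Hb; injection Hb as <-.
  destruct (Req_dec l 0) as [->|Hl0].
  + right; split; [reflexivity|]; unfold pt, st_pos; simpl; f_equal; ring.
  + left; destruct (child_step _ _ _ Hs Hc) as (W & _).
    apply (wedge_scale _ _ l) in W; [|lra].
    unfold vec, st_pos in W; simpl in W.
    replace (IZR (st_x s) + l * (IZR (st_x c) - IZR (st_x s)) - IZR (st_x s))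
      with (l * (IZR (st_x c) - IZR (st_x s))) by ring.
    replace (IZR (st_y s) + l * (IZR (st_y c) - IZR (st_y s)) - IZR (st_y s))
      with (l * (IZR (st_y c) - IZR (st_y s))) by ring.
    exact W.
- left; rewrite app_comm_cons, removelast_last in Ha.
  rewrite app_comm_cons, descend_snoc, Ha in Hb.
  rewrite descend_cons, Hc in Ha.
  destruct (child_nested _ _ _ Hs Hc) as (_ & _ & Vc & _).
  exact (wedge_segment_point _ _ (st_pos s) (st_pos sa) (st_pos sb) l ltac:(lra)
    (branch_wedge _ _ _ _ _ Hs Hc Ha) (edge_in_wedge _ _ _ _ _ Vc Ha Hb)).
Qed.

Lemma edge_point_in_branch t w i r q : is_vertex t (w ++ i :: r) ->
  on_seg q (algorithm1 t (removelast (w ++ i :: r))) (algorithm1 t (w ++ i :: r)) ->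
  exists sw c, descend (root_state t) w = Some sw /\ descend sw [i] = Some c /\
    (wedge (st_a1 c) (st_a2 c) (fst q - IZR (st_x sw), snd q - IZR (st_y sw)) \/
     (r = [] /\ q = pt (algorithm1 t w))).
Proof.
intros Hv Hq.
destruct (vertex_state t w (is_vertex_app_l _ _ _ Hv)) as (sw & Hsw & Hpw & Vw).
destruct (vertex_state t _ Hv) as (sb & Hsb & Hpb & _).
destruct (vertex_state t _ (is_vertex_removelast _ _ Hv)) as (sa & Hsa & Hpa & _).
rewrite removelast_app in Hsa by discriminate.
rewrite descend_app, Hsw in Hsa, Hsb; rewrite Hpa, Hpb in Hq.
destruct (proj1 (is_vertex_descend sw [i])) as [c Hc].
{ apply is_vertex_descend; rewrite descend_cons in Hsb.
  destruct (descend sw [i]); [eauto | discriminate]. }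
exists sw, c; split; [exact Hsw|]; split; [exact Hc|].
rewrite Hpw; exact (branch_segment_point _ _ _ _ _ _ _ Vw Hc Hsa Hsb Hq).
Qed.

Lemma edge_point_le_child t c q : c <> [] -> is_vertex t c ->
  on_seg q (algorithm1 t (removelast c)) (algorithm1 t c) ->
  fst q <= IZR (fst (algorithm1 t c)) /\ snd q <= IZR (snd (algorithm1 t c)).
Proof.
intros Hne Hc (l & Hl & Hqx & Hqy).
destruct (exists_last Hne) as (p & k & ->); rewrite removelast_last in Hqx, Hqy.
destruct (vertex_state t _ (is_vertex_app_l _ _ _ Hc)) as (sp & Hsp & Hpp & Vp).
destruct (vertex_state t _ Hc) as (sc & Hsc & Hpc & _).
rewrite descend_snoc, Hsp in Hsc.
destruct (child_step _ _ _ Vp Hsc) as ((Wx & Wy & _) & _).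
rewrite Hpp, Hpc in *; unfold vec, st_pos in *; simpl in *; split; nra.
Qed.

Lemma edge_meets_descendant_edge t c j r q : c <> [] -> is_vertex t (c ++ j :: r) ->
  on_seg q (algorithm1 t (removelast c)) (algorithm1 t c) ->
  on_seg q (algorithm1 t (removelast (c ++ j :: r))) (algorithm1 t (c ++ j :: r)) ->
  r = [] /\ q = pt (algorithm1 t c).
Proof.
intros Hne Hv Hq1 Hq2.
destruct (edge_point_in_branch _ _ _ _ _ Hv Hq2) as (sc & cj & Hsc & _ & [W|Hr]); [exfalso|exact Hr].
destruct (edge_point_le_child _ _ _ Hne (is_vertex_app_l _ _ _ Hv) Hq1) as [Lx Ly].
rewrite (algorithm1_descend _ _ _ Hsc) in Lx, Ly; destruct W as (Wx & _); simpl in *; lra.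
Qed.

Lemma edges_in_distinct_branches_meet t w i j r1 r2 q : i <> j ->
  is_vertex t (w ++ i :: r1) -> is_vertex t (w ++ j :: r2) ->
  on_seg q (algorithm1 t (removelast (w ++ i :: r1))) (algorithm1 t (w ++ i :: r1)) ->
  on_seg q (algorithm1 t (removelast (w ++ j :: r2))) (algorithm1 t (w ++ j :: r2)) ->
  r1 = [] /\ r2 = [] /\ q = pt (algorithm1 t w).
Proof.
intros Hij Hv1 Hv2 Hq1 Hq2.
destruct (edge_point_in_branch _ _ _ _ _ Hv1 Hq1) as (sw & ci & Hsw & Hci & C1).
destruct (edge_point_in_branch _ _ _ _ _ Hv2 Hq2) as (sw' & cj & Hsw' & Hcj & C2).
rewrite Hsw in Hsw'; injection Hsw' as <-.
assert (Vw := proj1 (descend_nested _ _ _ (valid_root t) Hsw)).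
assert (Hpw := algorithm1_descend _ _ _ Hsw).
destruct C1 as [W1|(-> & Hq)], C2 as [W2|(-> & Hq')].
- destruct (children_separated _ _ _ _ _ Vw Hij Hci Hcj) as [Ho|Ho]; exfalso.
  + exact (wedge_disjoint _ _ _ _ _ Ho W1 W2).
  + exact (wedge_disjoint _ _ _ _ _ Ho W2 W1).
- exfalso; rewrite Hq', Hpw in W1; destruct W1 as (W1 & _); simpl in W1; lra.
- exfalso; rewrite Hq, Hpw in W2; destruct W2 as (W2 & _); simpl in W2; lra.
- auto.
Qed.

Lemma algorithm1_planar t : planar t (algorithm1 t).
Proof.
split; [exact (algorithm1_injective t)|].
intros c1 c2 [Hne1 Hv1] [Hne2 Hv2] Hneq q Hq1 Hq2.
destruct (common_prefix_split c1 c2) as (w & r1 & r2 & -> & -> & Hc).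
destruct Hc as [->|[->|(i & j & r1' & r2' & -> & -> & Hij)]].
- rewrite app_nil_r in *; destruct r2 as [|j r2]; [now rewrite app_nil_r in Hneq|].
  destruct (edge_meets_descendant_edge _ _ _ _ _ Hne1 Hv2 Hq1 Hq2) as [-> Hq].
  exists w; split; [now left|]; split; [right; symmetry; apply removelast_last | exact Hq].
- rewrite app_nil_r in *; destruct r1 as [|i r1]; [now rewrite app_nil_r in Hneq|].
  destruct (edge_meets_descendant_edge _ _ _ _ _ Hne2 Hv1 Hq2 Hq1) as [-> Hq].
  exists w; split; [right; symmetry; apply removelast_last|]; split; [now left | exact Hq].
- destruct (edges_in_distinct_branches_meet _ _ _ _ _ _ _ Hij Hv1 Hv2 Hq1 Hq2) as (-> & -> & Hq).
  exists w; split; [right; symmetry; apply removelast_last|].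
  split; [right; symmetry; apply removelast_last | exact Hq].
Qed.

Lemma LocallySorted_nth {A} (R : A -> A -> Prop) l d : LocallySorted R l ->
  forall k, (S k < length l)%nat -> R (nth k l d) (nth (S k) l d).
Proof.
induction 1 as [|a|a b l _ IH Hab]; intros k Hk; simpl in Hk; [lia|lia|].
destruct k as [|k]; [exact Hab|].
apply (IH k); simpl; lia.
Qed.

Lemma LocallySorted_join {A} (R : A -> A -> Prop) l1 x l2 :
  LocallySorted R (l1 ++ [x]) -> LocallySorted R (x :: l2) -> LocallySorted R (l1 ++ x :: l2).
Proof.
induction l1 as [|a [|b l1] IH]; simpl; intros H1 H2; [exact H2| |].
- inversion H1; subst; now constructor.
- inversion H1; subst; constructor; [now apply IH | assumption].
Qed.

Lemma LocallySorted_rev {A} (R : A -> A -> Prop) l :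
  LocallySorted (fun a b => R b a) l -> LocallySorted R (rev l).
Proof.
induction 1 as [|a|a b l _ IH Hab]; simpl; [constructor | constructor |].
rewrite <- app_assoc; apply (LocallySorted_join _ _ _ _ IH).
constructor; [constructor | exact Hab].
Qed.

Fixpoint prefixes_from (p r : list nat) : list (list nat) :=
  match r with [] => [p] | i :: r' => p :: prefixes_from (p ++ [i]) r' end.

Lemma prefixes_from_hd p r : exists l, prefixes_from p r = p :: l.
Proof. destruct r; simpl; eauto. Qed.

Lemma prefixes_from_last p r : exists l, prefixes_from p r = l ++ [p ++ r].
Proof.
revert p; induction r as [|i r IH]; intros p; simpl.
- exists []; now rewrite app_nil_r.
- destruct (IH (p ++ [i])) as [l ->]; exists (p :: l); now rewrite <- app_assoc.
Qed.

Lemma in_prefixes_from p r q : In q (prefixes_from p r) -> exists s t, q = p ++ s /\ r = s ++ t.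
Proof.
revert p; induction r as [|i r IH]; intros p H; simpl in H.
- destruct H as [<-|[]]; exists [], []; now rewrite app_nil_r.
- destruct H as [<-|H].
  + exists [], (i :: r); now rewrite app_nil_r.
  + destruct (IH _ H) as (s & t & -> & ->); exists (i :: s), t; now rewrite <- app_assoc.
Qed.

Lemma prefixes_from_sorted (R : list nat -> list nat -> Prop) p r :
  (forall s k t, r = s ++ k :: t -> R (p ++ s) (p ++ s ++ [k])) ->
  LocallySorted R (prefixes_from p r).
Proof.
revert p; induction r as [|i r IH]; intros p H; simpl; [constructor|].
destruct (prefixes_from_hd (p ++ [i]) r) as [l E]; rewrite E; constructor.
- rewrite <- E; apply IH; intros s k t Hr.
  rewrite <- !app_assoc; apply (H (i :: s) k t); now rewrite Hr.
- specialize (H [] i r eq_refl); now rewrite app_nil_r in H.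
Qed.

Lemma in_prefixes_from_vertex t w r x : is_vertex t (w ++ r) ->
  In x (prefixes_from w r) -> is_vertex t x.
Proof.
intros Hv Hx; destruct (in_prefixes_from _ _ _ Hx) as (s & t' & -> & ->).
rewrite app_assoc in Hv; exact (is_vertex_app_l _ _ _ Hv).
Qed.

Definition height (d1 d2 : R) (P : Z * Z) : R := d1 * IZR (fst P) + d2 * IZR (snd P).

Lemma height_lt_of_vec d1 d2 P Q : 0 < d1 * fst (vec P Q) + d2 * snd (vec P Q) ->
  height d1 d2 P < height d1 d2 Q.
Proof. unfold height, vec; simpl; intros H; nra. Qed.

Lemma height_gt_of_vec d1 d2 P Q : d1 * fst (vec P Q) + d2 * snd (vec P Q) < 0 ->
  height d1 d2 Q < height d1 d2 P.
Proof. unfold height, vec; simpl; intros H; nra. Qed.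

(* Up from [w ++ r1] to the common ancestor [w], then down to [w ++ r2]. *)
Lemma monotone_path_through t w r1 r2 d1 d2 :
  is_vertex t (w ++ r1) -> is_vertex t (w ++ r2) -> (d1, d2) <> (0, 0) ->
  (forall s k t', r1 = s ++ k :: t' ->
     height d1 d2 (algorithm1 t (w ++ s ++ [k])) < height d1 d2 (algorithm1 t (w ++ s))) ->
  (forall s k t', r2 = s ++ k :: t' ->
     height d1 d2 (algorithm1 t (w ++ s)) < height d1 d2 (algorithm1 t (w ++ s ++ [k]))) ->
  exists l, is_path t l /\ hd_error l = Some (w ++ r1) /\ last l [] = w ++ r2 /\
    monotone_path (algorithm1 t) l.
Proof.
intros Hv1 Hv2 Hd Hup Hdown.
set (step := fun a b => tree_adj a b /\
  height d1 d2 (algorithm1 t a) < height d1 d2 (algorithm1 t b)).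
destruct (prefixes_from_hd w r1) as [D1 E1]; destruct (prefixes_from_hd w r2) as [D2 E2].
exists (rev D1 ++ w :: D2).
assert (Hsorted : LocallySorted step (rev D1 ++ w :: D2)).
{ apply LocallySorted_join.
  - change (rev D1 ++ [w]) with (rev (w :: D1)); rewrite <- E1.
    apply LocallySorted_rev, prefixes_from_sorted; intros s k t' Hr; split.
    + right; exists k; now rewrite app_assoc.
    + exact (Hup s k t' Hr).
  - rewrite <- E2; apply prefixes_from_sorted; intros s k t' Hr; split.
    + left; exists k; now rewrite app_assoc.
    + exact (Hdown s k t' Hr). }
assert (Hin : forall x, In x (rev D1 ++ w :: D2) -> is_vertex t x).
{ intros x Hx; apply in_app_or in Hx; destruct Hx as [Hx|Hx].
  - apply in_rev in Hx; apply (in_prefixes_from_vertex _ _ _ _ Hv1); rewrite E1; now right.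
  - apply (in_prefixes_from_vertex _ _ _ _ Hv2); now rewrite E2. }
split; [split|split; [|split]].
- now apply Forall_forall.
- intros k Hk; exact (proj1 (LocallySorted_nth _ _ [] Hsorted k Hk)).
- destruct (prefixes_from_last w r1) as [L EL]; rewrite EL in E1.
  assert (Hrev : rev D1 ++ [w] = (w ++ r1) :: rev L).
  { change (rev D1 ++ [w]) with (rev (w :: D1)); rewrite <- E1, rev_app_distr; reflexivity. }
  replace (rev D1 ++ w :: D2) with ((rev D1 ++ [w]) ++ D2) by now rewrite <- app_assoc.
  now rewrite Hrev.
- destruct (prefixes_from_last w r2) as [L EL]; rewrite EL in E2; rewrite <- E2, app_assoc.
  apply last_last.
- exists d1, d2; split; [exact Hd|].
  intros k Hk; exact (proj2 (LocallySorted_nth _ _ [] Hsorted k Hk)).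
Qed.

Lemma branch_steps_in_wedge t w sw j r : descend (root_state t) w = Some sw ->
  is_vertex t (w ++ j :: r) -> exists cj, descend sw [j] = Some cj /\
  forall s k t', j :: r = s ++ k :: t' ->
    wedge (st_a1 cj) (st_a2 cj) (vec (algorithm1 t (w ++ s)) (algorithm1 t (w ++ s ++ [k]))).
Proof.
intros Hsw Hv; assert (Vw := proj1 (descend_nested _ _ _ (valid_root t) Hsw)).
destruct (vertex_state t _ Hv) as (sv & Hsv & _).
rewrite descend_app, Hsw, descend_cons in Hsv.
destruct (descend sw [j]) as [cj|] eqn:Hcj; [|discriminate].
exists cj; split; [reflexivity|]; intros s k t' Hr.
assert (Hvb : is_vertex t (w ++ s ++ [k])).
{ rewrite Hr in Hv; replace (w ++ s ++ k :: t') with ((w ++ s ++ [k]) ++ t') in Hv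
    by (now rewrite <- !app_assoc).
  exact (is_vertex_app_l _ _ _ Hv). }
destruct (vertex_state t _ Hvb) as (sb & Hsb & -> & _).
rewrite app_assoc in Hvb, Hsb.
destruct (vertex_state t _ (is_vertex_app_l _ _ _ Hvb)) as (sa & Hsa & -> & _).
rewrite descend_snoc, Hsa in Hsb; rewrite descend_app, Hsw in Hsa.
destruct s as [|j' s]; injection Hr as <- _.
- injection Hsa as <-; rewrite Hcj in Hsb; injection Hsb as <-.
  exact (proj1 (child_step _ _ _ Vw Hcj)).
- rewrite descend_cons, Hcj in Hsa.
  destruct (child_nested _ _ _ Vw Hcj) as (_ & _ & Vc & _).
  exact (edge_in_wedge _ _ _ _ _ Vc Hsa Hsb).
Qed.

Lemma downward_steps_increase_height t w r : is_vertex t (w ++ r) ->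
  (forall s k t', r = s ++ k :: t' ->
     height 1 1 (algorithm1 t (w ++ s)) < height 1 1 (algorithm1 t (w ++ s ++ [k]))).
Proof.
intros Hv s k t' Hr; destruct r as [|j r]; [now apply app_cons_not_nil in Hr|].
destruct (vertex_state t w (is_vertex_app_l _ _ _ Hv)) as (sw & Hsw & _).
destruct (branch_steps_in_wedge _ _ _ _ _ Hsw Hv) as (cj & _ & Hsteps).
destruct (Hsteps s k t' Hr) as (Wx & Wy & _).
apply height_lt_of_vec; lra.
Qed.

(* The line through the common ancestor in direction [b] separates two sibling wedges. *)
Lemma monotone_paths_across t w r1 r2 a b a' b' :
  is_vertex t (w ++ r1) -> is_vertex t (w ++ r2) -> 0 <= b <= PI/2 -> b <= a' ->
  (forall s k t', r1 = s ++ k :: t' ->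
     wedge a b (vec (algorithm1 t (w ++ s)) (algorithm1 t (w ++ s ++ [k])))) ->
  (forall s k t', r2 = s ++ k :: t' ->
     wedge a' b' (vec (algorithm1 t (w ++ s)) (algorithm1 t (w ++ s ++ [k])))) ->
  (exists l, is_path t l /\ hd_error l = Some (w ++ r1) /\ last l [] = w ++ r2 /\
     monotone_path (algorithm1 t) l) /\
  (exists l, is_path t l /\ hd_error l = Some (w ++ r2) /\ last l [] = w ++ r1 /\
     monotone_path (algorithm1 t) l).
Proof.
intros Hv1 Hv2 Hb Hba' H1 H2.
assert (Hnz : forall c, c <> 0 -> (- (c * sin b), c * cos b) <> (0, 0)).
{ intros c Hc E; injection E as Es Ec; assert (H := sin2_cos2 b); unfold Rsqr in H.
  apply Rmult_integral in Ec; destruct Ec as [|Ec]; [lra|].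
  assert (sin b = 0) by (destruct (Rmult_integral c (sin b)); lra).
  rewrite Ec in H; nra. }
assert (Below : forall s k t', r1 = s ++ k :: t' ->
  let v := vec (algorithm1 t (w ++ s)) (algorithm1 t (w ++ s ++ [k])) in
  snd v * cos b - fst v * sin b < 0).
{ intros s k t' Hr v; specialize (H1 s k t' Hr); fold v in H1; destruct v as [vx vy].
  exact (wedge_below_ray _ _ _ _ Hb H1). }
assert (Above : forall s k t', r2 = s ++ k :: t' ->
  let v := vec (algorithm1 t (w ++ s)) (algorithm1 t (w ++ s ++ [k])) in
  0 < snd v * cos b - fst v * sin b).
{ intros s k t' Hr v; specialize (H2 s k t' Hr); fold v in H2; destruct v as [vx vy].
  apply (wedge_mono b b' a' b') in H2; [|lra|lra].
  exact (wedge_above_ray _ _ _ _ Hb H2). }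
split.
- apply (monotone_path_through _ _ _ _ (- (1 * sin b)) (1 * cos b) Hv1 Hv2 (Hnz 1 ltac:(lra))).
  + intros s k t' Hr; specialize (Below s k t' Hr); cbv zeta in Below.
    apply height_gt_of_vec; lra.
  + intros s k t' Hr; specialize (Above s k t' Hr); cbv zeta in Above.
    apply height_lt_of_vec; lra.
- apply (monotone_path_through _ _ _ _ (- (-1 * sin b)) (-1 * cos b) Hv2 Hv1 (Hnz (-1) ltac:(lra))).
  + intros s k t' Hr; specialize (Above s k t' Hr); cbv zeta in Above.
    apply height_gt_of_vec; lra.
  + intros s k t' Hr; specialize (Below s k t' Hr); cbv zeta in Below.
    apply height_lt_of_vec; lra.
Qed.

Lemma algorithm1_monotone t : monotone_drawing t (algorithm1 t).
Proof.
intros u v Hu Hv.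
destruct (common_prefix_split u v) as (w & r1 & r2 & -> & -> & Hc).
destruct (vertex_state t w (is_vertex_app_l _ _ _ Hu)) as (sw & Hsw & _ & Vw).
destruct Hc as [->|[->|(i & j & r1' & r2' & -> & -> & Hij)]].
- apply (monotone_path_through _ _ _ _ 1 1 Hu Hv); [intros E; injection E; lra| |].
  + intros s k t' Hr; now apply app_cons_not_nil in Hr.
  + exact (downward_steps_increase_height _ _ _ Hv).
- apply (monotone_path_through _ _ _ _ (-1) (-1) Hu Hv); [intros E; injection E; lra| |].
  + intros s k t' Hr; specialize (downward_steps_increase_height _ _ _ Hu s k t' Hr).
    unfold height; lra.
  + intros s k t' Hr; now apply app_cons_not_nil in Hr.
- destruct (branch_steps_in_wedge _ _ _ _ _ Hsw Hu) as (ci & Hci & Si).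
  destruct (branch_steps_in_wedge _ _ _ _ _ Hsw Hv) as (cj & Hcj & Sj).
  destruct (child_nested _ _ _ Vw Hci) as (_ & _ & (Vi1 & Vi2 & Vi3) & _).
  destruct (child_nested _ _ _ Vw Hcj) as (_ & _ & (Vj1 & Vj2 & Vj3) & _).
  destruct (children_separated _ _ _ _ _ Vw Hij Hci Hcj) as [Ho|Ho].
  + assert (Hb : 0 <= st_a2 ci <= PI/2) by lra.
    exact (proj1 (monotone_paths_across _ _ _ _ _ _ _ _ Hu Hv Hb Ho Si Sj)).
  + assert (Hb : 0 <= st_a2 cj <= PI/2) by lra.
    exact (proj2 (monotone_paths_across _ _ _ _ _ _ _ _ Hv Hu Hb Ho Sj Si)).
Qed.

Theorem theorem4 (t : tree) :
  let n := tsize t in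
  let pos := algorithm1 t in
  monotone_drawing t pos /\
  planar t pos /\
  pos [] = (0%Z, 0%Z) /\
  respects_order t pos /\
  (forall p, is_vertex t p ->
     (0 <= fst (pos p) <= Z.of_nat n - 1)%Z /\
     (0 <= snd (pos p) <= Z.of_nat n - 1)%Z).
Proof.
cbv zeta; split; [apply algorithm1_monotone|].
split; [apply algorithm1_planar|].
split; [reflexivity|].
split; [apply algorithm1_respects_order | apply algorithm1_in_grid].
Qed.
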